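(* Let $\gamma$ be a functorial with $\gamma(G)>1$ for every finite group $G\ne1$, satisfying (F1) and (F2). (1) If $G=A_1\times\dots\times A_n$ is the direct product of its normal subgroups $A_i$, then $h_\gamma(G)=\max\{h_\gamma(A_i)\mid 1\le i\le n\}$. (2) If $G=\langle A_i\mid 1\le i\le n\rangle$ is the join of its subnormal subgroups $A_i$, then $h_\gamma(G)\le\max\{h_\gamma(A_i)\mid 1\le i\le n\}$; if moreover $\gamma$ satisfies (F5), then $h_\gamma(G)=\max\{h_\gamma(A_i)\mid 1\le i\le n\}$.
   Context: All groups are finite. A functorial is a function $\theta$ assigning to each group $G$ a characteristic subgroup $\theta(G)$ such that $f(\theta(G))=\theta(f(G))$ for every isomorphism $f$. Conditions (for every group $G$): (F1) $f(\gamma(G))\subseteq\gamma(f(G))$ for every epimorphism $f:G\to G^*$; (F2) $\gamma(N)\subseteq\gamma(G)$ for every $N\trianglelefteq G$; (F5) $\gamma(G)\cap N\subseteq\gamma(N)$ for every $N\trianglelefteq G$. The $\gamma$-series is $\gamma_{(0)}(G)=1$ and $\gamma_{(i+1)}(G)$ the full preimage of $\gamma(G/\gamma_{(i)}(G))$; $h_\gamma(G)$ is the least $h$ with $\gamma_{(h)}(G)=G$. *)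

From mathcomp Require Import all_boot all_fingroup all_solvable.
Set Implicit Arguments. Unset Strict Implicit. Unset Printing Implicit Defensive.
Import GroupScope.
Local Open Scope group_scope.

Definition gfun := forall gT : finGroupType, {group gT} -> {group gT}.

Definition functorial (gamma : gfun) : Prop :=
  (forall (gT : finGroupType) (G : {group gT}), gamma gT G \char G) /\
  (forall (gT rT : finGroupType) (G : {group gT}) (f : {morphism G >-> rT}),
      'injm f -> f @* (gamma gT G) = gamma rT (f @* G)%G).

Definition gamma_nontriv (gamma : gfun) : Prop :=
  forall (gT : finGroupType) (G : {group gT}), G :!=: 1 -> gamma gT G :!=: 1.

Definition condF1 (gamma : gfun) : Prop :=
  forall (gT rT : finGroupType) (G : {group gT}) (f : {morphism G >-> rT}),
    f @* (gamma gT G) \subset gamma rT (f @* G)%G.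

Definition condF2 (gamma : gfun) : Prop :=
  forall (gT : finGroupType) (G N : {group gT}), N <| G ->
    gamma gT N \subset gamma gT G.

Definition condF5 (gamma : gfun) : Prop :=
  forall (gT : finGroupType) (G N : {group gT}), N <| G ->
    gamma gT G :&: N \subset gamma gT N.

Fixpoint gseries (gamma : gfun) (gT : finGroupType) (G : {group gT}) (i : nat)
  : {group gT} :=
  match i with
  | 0 => 1%G
  | i'.+1 =>
      let H := gseries gamma G i' in
      (coset H @*^-1 gamma _ (G / H)%G)%G
  end.

(* Under the standing hypotheses
   (gamma(X) > 1 for X <> 1) the series strictly increases until it reaches G,
   so such an h exists and is at most #|G|; we search in [0, #|G|]. *)
Definition hgamma (gamma : gfun) (gT : finGroupType) (G : {group gT}) : nat :=
  find (fun h => gseries gamma G h == G) (iota 0 #|G|.+1).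

From mathcomp Require Import all_boot all_fingroup all_solvable.
Set Implicit Arguments. Unset Strict Implicit. Unset Printing Implicit Defensive.
Import GroupScope.
Local Open Scope group_scope.

(* The gamma-series is functorial in three ways: by (F1) a morphism maps the
   i-th term of the series of G into the i-th term of the series of its image;
   by (F2) the series of a subnormal subgroup H of G lies termwise in that of G;
   and by (F5) the i-th term of the series of G meets H inside the i-th term of
   the series of H.  As the series strictly increases until it reaches G,
   h_gamma(G) <= m exactly when G lies in the m-th term.  Hence the join of
   subnormal A_i lies in the term of index max h_gamma(A_i); under (F5) every
   A_i lies in its own term of index h_gamma(G); and every factor of a direct
   product is a homomorphic image of G. *)

Lemma subnormal_ind (gT : finGroupType) (G : {group gT}) (P : {group gT} -> Prop) :
    P G -> (forall H K : {group gT}, H <| K -> K <|<| G -> P K -> P H) ->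
  forall H : {group gT}, H <|<| G -> P H.
Proof.
move=> PG IH H /subnormalP[s]; elim: s H => [|K s IHs] H /=; first by move=> _ ->.
case/andP=> nsHK Ks defG; apply: IH nsHK _ (IHs K Ks defG).
by apply/subnormalP; exists s.
Qed.

Lemma dprod_morphim_factor (gT : finGroupType) (G K H : {group gT}) :
  K \x H = G -> exists f : {morphism G >-> gT}, f @* G = K.
Proof.
move=> defG; have cHK : trivm H @* H \subset 'C(idm K @* K).
  by rewrite morphim_trivm sub1G.
by exists (dprodm defG cHK); rewrite im_dprodm morphim_trivm morphim_idm // mulg1.
Qed.

Lemma bigdprod_factor (gT : finGroupType) (I : finType) (A : I -> {group gT})
    (G : {group gT}) i :
  \big[dprod/1]_(j : I) A j = G -> exists H : {group gT}, A i \x H = G.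
Proof.
rewrite (bigD1 i) //= => defG; have [[_ H _ defH] _ _ _] := dprodP defG.
by exists H; rewrite -defH.
Qed.

Section GammaSeries.

Variable gamma : gfun.
Hypothesis gamma_normal : forall (gT : finGroupType) (G : {group gT}), gamma G <| G.
Hypothesis gamma_ntriv : gamma_nontriv gamma.

Section OneGroup.

Variables (gT : finGroupType) (G : {group gT}).

Lemma gseries_normal i : gseries gamma G i <| G.
Proof.
elim: i => [|i IH] /=; first exact: normal1.
by rewrite -[X in _ <| X](quotientGK IH) cosetpre_normal gamma_normal.
Qed.

Lemma gseries_sub i : gseries gamma G i \subset G.
Proof. exact: normal_sub (gseries_normal i). Qed.

Lemma gseries_norm i : G \subset 'N(gseries gamma G i).
Proof. exact: normal_norm (gseries_normal i). Qed.

Lemma gseriesS i j : i <= j -> gseries gamma G i \subset gseries gamma G j.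
Proof.
move/subnK <-; elim: (j - i) => [|k IH]; first by rewrite add0n.
by rewrite addSn (subset_trans IH) ?sub_cosetpre.
Qed.

Lemma gseries_stable i j : i <= j -> G \subset gseries gamma G i ->
  gseries gamma G j = G.
Proof.
move=> le_ij sGi; apply/val_inj/eqP.
by rewrite eqEsubset gseries_sub (subset_trans sGi) ?gseriesS.
Qed.

Lemma gseries_proper i : gseries gamma G i \proper G ->
  gseries gamma G i \proper gseries gamma G i.+1.
Proof.
set K := gseries gamma G i => prKG.
have nKG : G \subset 'N(K) := gseries_norm i.
rewrite -{1}(ker_coset K) kerE cosetpre_proper proper1G gamma_ntriv //.
by rewrite -subG1 quotient_sub1 //; case/andP: prKG.
Qed.

Lemma card_gseries_gt i : gseries gamma G i != G -> i < #|gseries gamma G i|.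
Proof.
elim: i => [|i IH] neG; first by rewrite cards1.
have neGi : gseries gamma G i != G.
  by apply: contra neG => /eqP defG; rewrite (@gseries_stable i) ?defG.
apply: leq_ltn_trans (IH neGi) (proper_card (gseries_proper _)).
by rewrite properEneq neGi gseries_sub.
Qed.

Lemma gseries_card : gseries gamma G #|G| = G.
Proof.
apply/eqP; apply: contraT => /card_gseries_gt.
by rewrite ltnNge subset_leq_card ?gseries_sub.
Qed.

Lemma gseries_hgamma : gseries gamma G (hgamma gamma G) = G.
Proof.
have: has (fun h => gseries gamma G h == G) (iota 0 #|G|.+1).
  apply/hasP; exists #|G|; first by rewrite mem_iota add0n ltnSn.
  by rewrite gseries_card.
move=> /[dup] /(nth_find 0) + /[!has_find] /[!size_iota] lt_h.
rewrite (nth_iota _ _ lt_h) add0n -/(hgamma gamma G).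
exact/eqP.
Qed.

Lemma leq_hgamma m : (hgamma gamma G <= m) = (G \subset gseries gamma G m).
Proof.
apply/idP/idP => [le_hm | sGm].
  by rewrite -{1}gseries_hgamma gseriesS.
rewrite leqNgt; apply/negP => lt_mh.
have lt_mG : m < #|G|.+1.
  by rewrite -[#|G|.+1](size_iota 0) (leq_trans lt_mh) ?find_size.
have := before_find 0 lt_mh.
by rewrite (nth_iota _ _ lt_mG) add0n (gseries_stable (leqnn m) sGm) eqxx.
Qed.

End OneGroup.

Hypothesis gamma_F1 : condF1 gamma.

Lemma morphim_cosetpre_gamma (gT rT : finGroupType) (G K : {group gT})
    (f : {morphism G >-> rT}) (M K' : {group rT}) :
    G \subset 'N(K) -> f @* G = M -> M \subset 'N(K') -> f @* K \subset K' ->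
  f @* (coset K @*^-1 gamma (G / K)) \subset coset K' @*^-1 gamma (M / K').
Proof.
(* (F1) for the morphism G / K -> M / K' induced by f. *)
move=> nKG defM nK'M sfKK'.
have dom_qf : G \subset 'dom (coset K' \o f) by rewrite -sub_morphim_pre // defM.
pose qf := restrm dom_qf (coset K' \o f); pose q := restrm nKG (coset K).
have ker_q_qf : 'ker q \subset 'ker qf.
  rewrite !ker_restrm ker_comp !ker_coset subsetI subsetIl /=.
  by rewrite -sub_morphim_pre ?subsetIl // (subset_trans (morphimS f (subsetIr G K))).
pose g := factm ker_q_qf (subxx G).
have im_q : (q @* G)%G = (G / K)%G by apply: val_inj; rewrite /= morphim_restrm setIid.
have im_g : (g @* (q @* G))%G = (M / K')%G.
  by apply: val_inj; rewrite /= morphim_factm morphim_restrm setIid morphim_comp defM.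
have := gamma_F1 g; rewrite [X in gamma X]im_q im_g => /subsetP F1g.
apply/subsetP=> _ /morphimP[x Gx /morphpreP[_ gx] ->].
apply/morphpreP; split; first by rewrite (subsetP nK'M) // -defM mem_morphim.
have <- : g (q x) = coset_morphism K' (f x) by rewrite /g factmE.
by rewrite F1g ?mem_morphim.
Qed.

Lemma morphim_gseries (gT rT : finGroupType) (G : {group gT})
    (f : {morphism G >-> rT}) i :
  f @* gseries gamma G i \subset gseries gamma (f @* G)%G i.
Proof.
elim: i => [|i IH]; first by rewrite morphim1 sub1G.
by apply: morphim_cosetpre_gamma; rewrite ?gseries_norm.
Qed.

Lemma hgamma_morphim (gT rT : finGroupType) (G : {group gT}) (f : {morphism G >-> rT}) :
  hgamma gamma (f @* G)%G <= hgamma gamma G.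
Proof.
by rewrite leq_hgamma (subset_trans _ (morphim_gseries f _)) // morphimS // -leq_hgamma.
Qed.

Lemma setI_cosetpre_gamma (gT : finGroupType) (N K K' : {group gT}) :
    N \subset 'N(K) -> N \subset 'N(K') -> N :&: K \subset K' ->
  N :&: coset K @*^-1 gamma (N / K) \subset coset K' @*^-1 gamma (N / K').
Proof.
have idmE (A : {set gT}) : idm N @* A = N :&: A.
  by rewrite -morphimIdom morphim_idm ?subsetIl.
move=> nKN nK'N sKK'; rewrite -idmE.
by apply: morphim_cosetpre_gamma; rewrite ?idmE ?setIid.
Qed.

Hypothesis gamma_F2 : condF2 gamma.

Lemma gseries_normal_sub (gT : finGroupType) (G N : {group gT}) i :
  N <| G -> gseries gamma N i \subset gseries gamma G i.
Proof.
move=> nsNG; elim: i => [|i IH]; first exact: sub1G.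
set K := gseries gamma G i.
have nKN : N \subset 'N(K) := subset_trans (normal_sub nsNG) (gseries_norm G i).
rewrite -(setIidPr (gseries_sub N i.+1)).
apply: subset_trans (setI_cosetpre_gamma (gseries_norm N i) nKN _) _.
  by rewrite subIset ?IH ?orbT.
by rewrite cosetpreSK gamma_F2 ?quotient_normal.
Qed.

Lemma gseries_subnormal_sub (gT : finGroupType) (G H : {group gT}) i :
  H <|<| G -> gseries gamma H i \subset gseries gamma G i.
Proof.
move: H; apply: subnormal_ind => // H K nsHK _.
exact: subset_trans (gseries_normal_sub i nsHK).
Qed.

Lemma hgamma_join (gT : finGroupType) (I : finType) (G : {group gT})
    (A : I -> {group gT}) :
    (forall i, A i <|<| G) -> G :=: << \bigcup_(i : I) A i >> ->
  hgamma gamma G <= \max_(i : I) hgamma gamma (A i).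
Proof.
move=> snAG defG; rewrite leq_hgamma {1}defG gen_subG; apply/bigcupsP=> i _.
rewrite (subset_trans _ (gseries_subnormal_sub _ (snAG i))) // -leq_hgamma.
exact: leq_bigmax.
Qed.

Lemma hgamma_bigdprod (gT : finGroupType) (I : finType) (G : {group gT})
    (A : I -> {group gT}) :
  \big[dprod/1]_(i : I) A i = G -> hgamma gamma G = \max_(i : I) hgamma gamma (A i).
Proof.
move=> defG; apply/eqP; rewrite eqn_leq hgamma_join ?(bigdprodWY defG) //=.
  apply/bigmax_leqP=> i _; have [H /dprod_morphim_factor[f imf]] := bigdprod_factor i defG.
  have -> : A i = (f @* G)%G by apply: val_inj; rewrite /= imf.
  exact: hgamma_morphim.
move=> i; have [H /dprod_normal2[nsAG _]] := bigdprod_factor i defG.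
exact: normal_subnormal.
Qed.

Hypothesis gamma_F5 : condF5 gamma.

Lemma gseries_normal_meet (gT : finGroupType) (G N : {group gT}) i :
  N <| G -> gseries gamma G i :&: N \subset gseries gamma N i.
Proof.
move=> nsNG; elim: i => [|i IH]; first exact: subsetIl.
set K := gseries gamma G i.
have nKN : N \subset 'N(K) := subset_trans (normal_sub nsNG) (gseries_norm G i).
have sNK_gamma : N :&: gseries gamma G i.+1 \subset coset K @*^-1 gamma (N / K).
  apply/subsetP=> x /setIP[Nx /morphpreP[nKx gx]].
  apply/morphpreP; split=> //; apply: (subsetP (gamma_F5 (quotient_normal K nsNG))).
  by rewrite inE gx mem_quotient.
rewrite setIC; apply: subset_trans (setI_cosetpre_gamma nKN (gseries_norm N i) _).
  by rewrite subsetI subsetIl sNK_gamma.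
by rewrite setIC.
Qed.

Lemma gseries_subnormal_meet (gT : finGroupType) (G H : {group gT}) i :
  H <|<| G -> gseries gamma G i :&: H \subset gseries gamma H i.
Proof.
move: H; apply: subnormal_ind => [|H K nsHK _ sGK]; first exact: subsetIl.
apply: subset_trans (gseries_normal_meet i nsHK).
rewrite subsetI subsetIr andbT (subset_trans _ sGK) //.
by rewrite setIS ?normal_sub.
Qed.

Lemma hgamma_subnormal (gT : finGroupType) (G H : {group gT}) :
  H <|<| G -> hgamma gamma H <= hgamma gamma G.
Proof.
move=> snHG; rewrite leq_hgamma (subset_trans _ (gseries_subnormal_meet _ snHG)) //.
by rewrite gseries_hgamma subsetI subxx subnormal_sub.
Qed.

Lemma hgamma_join_subnormal (gT : finGroupType) (I : finType) (G : {group gT})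
    (A : I -> {group gT}) :
    (forall i, A i <|<| G) -> G :=: << \bigcup_(i : I) A i >> ->
  hgamma gamma G = \max_(i : I) hgamma gamma (A i).
Proof.
move=> snAG defG; apply/eqP; rewrite eqn_leq hgamma_join //=.
by apply/bigmax_leqP=> i _; apply: hgamma_subnormal.
Qed.

End GammaSeries.

Theorem theorem8 (gamma : gfun) :
  functorial gamma -> gamma_nontriv gamma -> condF1 gamma -> condF2 gamma ->
  (* (1) direct product of normal subgroups *)
  (forall (gT : finGroupType) (n : nat) (G : {group gT})
          (A : 'I_n -> {group gT}),
      \big[dprod/1]_(i < n) A i = G ->
      hgamma gamma G = \max_(i < n) hgamma gamma (A i)) /\
  (* (2) join of subnormal subgroups *)
  (forall (gT : finGroupType) (n : nat) (G : {group gT})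
          (A : 'I_n -> {group gT}),
      (forall i, A i <|<| G) ->
      G :=: << \bigcup_(i < n) A i >> ->
      (hgamma gamma G <= \max_(i < n) hgamma gamma (A i))%N /\
      (condF5 gamma -> hgamma gamma G = \max_(i < n) hgamma gamma (A i))).
Proof.
move=> [gamma_char _] gamma_ntriv gamma_F1 gamma_F2.
have gamma_normal gT (G : {group gT}) : gamma gT G <| G := char_normal (gamma_char gT G).
split=> [gT n G A | gT n G A snAG defG]; first exact: hgamma_bigdprod.
split=> [|gamma_F5]; first exact: hgamma_join.
exact: hgamma_join_subnormal.
Qed.
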